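(* Let $\Lambda$ be a finite $k$-graph with no sources and let $\{t_\lambda\}_{\lambda\in\Lambda}$ be a permutative representation of $C^*(\Lambda)$ on $\mathcal H$, with orthonormal basis $\{e_i\}_{i\in I}$, sets $J_\lambda,K_\lambda\subseteq I$, bijections $\tilde\sigma_\lambda:J_\lambda\to K_\lambda$ and coding maps $\tilde\sigma^n:I\to I$. Equip $I$ with counting measure and identify $\mathcal H$ with $\ell^2(I)$ via $e_i\leftrightarrow\chi_{\{i\}}$. Then the data $D_\lambda=J_\lambda$, $\tau_\lambda=\tilde\sigma_\lambda$ (so $R_\lambda=K_\lambda$), $\tau^n=\tilde\sigma^n$ form a $\Lambda$-semibranching function system on $I$, and the associated $\Lambda$-semibranching representation coincides with $\{t_\lambda\}_{\lambda\in\Lambda}$.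
   Context: A $k$-graph ($k\ge1$) is a countable small category $\Lambda$ with a functor $d:\Lambda\to\mathbb N^k$ satisfying unique factorization: if $d(\lambda)=m+n$ there are unique $\mu,\nu$ with $\lambda=\mu\nu$, $d(\mu)=m$, $d(\nu)=n$. $\Lambda^0$ = vertices, $r,s$ = range, source, $\Lambda^n=d^{-1}(n)$, $v\Lambda^n=\{\lambda\in\Lambda^n:r(\lambda)=v\}$, $s(\lambda)\Lambda=\{\nu:r(\nu)=s(\lambda)\}$; finite: each $\Lambda^n$ finite; no sources: each $v\Lambda^n$ nonempty. A representation of $C^*(\Lambda)$ is a family of partial isometries $\{t_\lambda\}$ satisfying (CK1) $\{t_v\}$ mutually orthogonal projections, (CK2) $t_\lambda t_\eta=t_{\lambda\eta}$ if $s(\lambda)=r(\eta)$, (CK3) $t_\lambda^*t_\lambda=t_{s(\lambda)}$, (CK4) $t_v=\sum_{\lambda\in v\Lambda^n}t_\lambda t_\lambda^*$. Permutative: orthonormal basis $\{e_i\}_{i\in I}$ and for each $\lambda$ sets $J_\lambda,K_\lambda\subseteq I$ and a bijection $\tilde\sigma_\lambda:J_\lambda\to K_\lambda$ with (a) $\bigcup_{\lambda\in\Lambda^n}J_\lambda=\bigcup_{\lambda\in\Lambda^n}K_\lambda=I$ for all $n$; (b) $K_\nu\subseteq J_\lambda$ and $\tilde\sigma_\lambda\circ\tilde\sigma_\nu=\tilde\sigma_{\lambda\nu}$ for $\nu\in s(\lambda)\Lambda$; (c) $t_\lambda e_i=e_{\tilde\sigma_\lambda(i)}$ for $i\in J_\lambda$,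 $0$ otherwise; (d) $t_\lambda^*e_{\tilde\sigma_\lambda(i)}=e_i$ for $i\in J_\lambda$, $t_\lambda^*e_j=0$ for $j\in K_{\lambda'}$, $\lambda'\ne\lambda$, $d(\lambda')=d(\lambda)$. For each $n$ the $K_\lambda$ ($\lambda\in\Lambda^n$) partition $I$, and $\tilde\sigma^n(i)$ for $i\in K_\lambda$, $\lambda\in\Lambda^n$, is the unique $i_n\in J_\lambda$ with $\tilde\sigma_\lambda(i_n)=i$. A semibranching function system on a measure space $(X,\mu)$ is a finite family of measurable maps $\sigma_i:D_i\to X$ ($D_i$ measurable) with $R_i=\sigma_i(D_i)$ satisfying $\mu(X\setminus\bigcup R_i)=0$, $\mu(R_i\cap R_j)=0$ for $i\ne j$, and Radon–Nikodym derivatives $\Phi_{\sigma_i}=d(\mu\circ\sigma_i)/d\mu>0$ a.e. on $D_i$; a coding map is a measurable $\sigma:X\to X$ with $\sigma\circ\sigma_i=\mathrm{id}$ on $D_i$. A $\Lambda$-semibranching function system on $(X,\mu)$ consists of measurable sets $D_\lambda$, maps $\tau_\lambda:D_\lambda\to X$ and $\tau^m:X\to X$ ($m\in\mathbb N^k$) such that: (a) for each $m$, $\{\tau_\lambda:d(\lambda)=m\}$ is a semibranching function system with coding map $\tau^m$; (b) $\tau_v=\mathrm{id}$ and $\mu(D_v)>0$ for $v\in\Lambda^0$; (c) with $R_\lambda=\tau_\lambda(D_\lambda)$, for $\nu\in s(\lambda)\Lambda$, $R_\nu\subseteq D_\lambda$ up to null sets and $\tau_\lambda\tau_\nu=\tau_{\lambda\nu}$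 a.e.; (d) $\tau^m\circ\tau^n=\tau^{m+n}$. The associated $\Lambda$-semibranching representation on $L^2(X,\mu)$ is $S_\lambda f(x)=(\Phi_{\tau_\lambda}\circ\tau^{d(\lambda)})^{-1/2}(x)\,\chi_{R_\lambda}(x)\,f(\tau^{d(\lambda)}(x))$.
   Formalization: The representation $\{t_\lambda\}$ has $t_v\neq 0$ for every vertex v ∈ Λ⁰, that is, every vertex projection is nonzero and each $J_v$ is nonempty. The statement above fails without it. *)

From HB Require Import structures.
From mathcomp Require Import all_boot all_order all_algebra.
From mathcomp Require Import all_classical all_reals all_analysis.
From mathcomp Require Import complex.
Set Implicit Arguments.
Unset Strict Implicit.
Unset Printing Implicit Defensive.
Import Order.TTheory GRing.Theory Num.Theory.
Local Open Scope classical_set_scope.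
Local Open Scope ring_scope.

Definition Nk (k : nat) := {ffun 'I_k -> nat}.
Definition Nk0 (k : nat) : Nk k := [ffun=> 0%N].
Definition Nkadd (k : nat) (m n : Nk k) : Nk k := [ffun i => (m i + n i)%N].

(* Composition kcomp l m is the composite "l m" (first m then l), meaningful *)
(* when ks l = kr m; kid v is the identity morphism at v (so vertices are   *)
(* identified with the identity morphisms, i.e. Lambda^0).                  *)
Record kgraph (k : nat) := KGraph {
  kvert : countType;
  kmor : countType;
  kr : kmor -> kvert;
  ks : kmor -> kvert;
  kid : kvert -> kmor;
  kcomp : kmor -> kmor -> kmor;
  kdeg : kmor -> Nk k;
  kr_id : forall v, kr (kid v) = v;
  ks_id : forall v, ks (kid v) = v;
  kr_comp : forall l m, ks l = kr m -> kr (kcomp l m) = kr l;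
  ks_comp : forall l m, ks l = kr m -> ks (kcomp l m) = ks m;
  kcomp_idl : forall l, kcomp (kid (kr l)) l = l;
  kcomp_idr : forall l, kcomp l (kid (ks l)) = l;
  kcompA : forall l m n, ks l = kr m -> ks m = kr n ->
    kcomp (kcomp l m) n = kcomp l (kcomp m n);
  kdeg_id : forall v, kdeg (kid v) = Nk0 k;
  kdeg_comp : forall l m, ks l = kr m -> kdeg (kcomp l m) = Nkadd (kdeg l) (kdeg m);
  kfact : forall l (m n : Nk k), kdeg l = Nkadd m n ->
    exists! p : kmor * kmor,
      [/\ ks p.1 = kr p.2, kcomp p.1 p.2 = l, kdeg p.1 = m & kdeg p.2 = n]
}.

Definition kfinite k (L : kgraph k) : Prop :=
  forall n : Nk k, finite_set [set l : kmor L | kdeg l = n].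

Definition no_sources k (L : kgraph k) : Prop :=
  forall (v : kvert L) (n : Nk k), exists l : kmor L, kr l = v /\ kdeg l = n.

Section L2.
Variables (R : realType) (I : choiceType).
Local Open Scope complex_scope.

Definition sqmod (z : R[i]) : R := (complex.Re z) ^+ 2 + (complex.Im z) ^+ 2.

Definition norm2 (f : I -> R[i]) : \bar R :=
  (\esum_(i in [set: I]) (sqmod (f i))%:E)%E.

Definition l2 (f : I -> R[i]) : Prop := (norm2 f < +oo)%E.

Definition rsum (h : I -> R) : R :=
  fine (\esum_(i in [set: I]) (Num.max (h i) 0)%:E)%E
  - fine (\esum_(i in [set: I]) (Num.max (- h i) 0)%:E)%E.

Definition csum (h : I -> R[i]) : R[i] :=
  Complex (rsum (fun i => complex.Re (h i))) (rsum (fun i => complex.Im (h i))).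

Definition ip (f g : I -> R[i]) : R[i] := csum (fun i => f i * Num.conj (g i)).

(* operators on l^2(I) (only their values on l^2(I) matter) *)
Definition op := (I -> R[i]) -> (I -> R[i]).

Definition opeq (T S : op) : Prop := forall f, l2 f -> T f = S f.

Definition zero_op : op := fun _ _ => 0.

Definition bounded_linear (T : op) : Prop :=
  [/\ forall f, l2 f -> l2 (T f),
      forall (a : R[i]) f g, l2 f -> l2 g ->
        T (fun i => a * f i + g i) = (fun i => a * T f i + T g i) &
      exists M : R, forall f, l2 f -> (norm2 (T f) <= M%:E * norm2 f)%E].

Definition is_adjoint (T S : op) : Prop :=
  forall f g, l2 f -> l2 g -> ip (T f) g = ip f (S g).

End L2.

Section Rep.
Variables (R : realType) (k : nat) (L : kgraph k) (I : choiceType).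
Variables (t tstar : kmor L -> op R I).

Definition is_rep : Prop :=
  [/\
      forall l, [/\ bounded_linear (t l), bounded_linear (tstar l),
                    is_adjoint (t l) (tstar l) &
                    opeq (fun f => t l (tstar l (t l f))) (t l)],
      (forall v, opeq (fun f => t (kid v) (t (kid v) f)) (t (kid v))
                 /\ opeq (tstar (kid v)) (t (kid v)))
      /\ (forall v w, v <> w -> opeq (fun f => t (kid v) (t (kid w) f)) (@zero_op R I)),
      forall l m, ks l = kr m -> opeq (fun f => t l (t m f)) (t (kcomp l m)),
      forall l, opeq (fun f => tstar l (t l f)) (t (kid (ks l))) &
      forall (v : kvert L) (n : Nk k) f, l2 f -> forall i,
        t (kid v) f i
        = (\sum_(l \in [set l : kmor L | kr l = v /\ kdeg l = n]) t l (tstar l f) i)%R].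

Definition ebasis (i : I) : I -> R[i] := fun j => if j == i then 1 else 0.

Definition permutative (J K : kmor L -> set I) (sig : kmor L -> I -> I) : Prop :=
  [/\ forall l, set_bij (J l) (K l) (sig l),
      forall n : Nk k,
        \bigcup_(l in [set l : kmor L | kdeg l = n]) J l = [set: I]
        /\ \bigcup_(l in [set l : kmor L | kdeg l = n]) K l = [set: I],
      forall l nu, kr nu = ks l ->
        K nu `<=` J l /\ (forall i, J nu i -> sig l (sig nu i) = sig (kcomp l nu) i),
      forall l i, (J l i -> t l (ebasis i) = ebasis (sig l i))
                  /\ (~ J l i -> t l (ebasis i) = (fun _ => 0)) &
      forall l, (forall i, J l i -> tstar l (ebasis (sig l i)) = ebasis i)
        /\ (forall l' j, l' <> l -> kdeg l' = kdeg l -> K l' j ->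
              tstar l (ebasis j) = (fun _ => 0))].

Definition coding_maps (J K : kmor L -> set I) (sig : kmor L -> I -> I)
    (sign : Nk k -> I -> I) : Prop :=
  forall (n : Nk k) l i, kdeg l = n -> K l i -> J l (sign n i) /\ sig l (sign n i) = i.

End Rep.

Section SBFS.
Local Open Scope complex_scope.
Local Open Scope ereal_scope.
Variables (d : measure_display) (X : measurableType d) (R : realType).
Variable (mu : {measure set X -> \bar R}).

Definition RN_deriv (D : set X) (s : X -> X) (Phi : X -> R) : Prop :=
  [/\ measurable_fun D Phi, (forall x, D x -> (0 <= Phi x)%R) &
      forall E, measurable E -> E `<=` D ->
        mu (s @` E) = \int[mu]_(x in E) (Phi x)%:E].

Definition sbfs (Ix : Type) (A : set Ix) (D : Ix -> set X) (s : Ix -> X -> X)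
    (Phi : Ix -> X -> R) (cod : X -> X) : Prop :=
  [/\ finite_set A
      /\ (forall a, A a -> measurable (D a) /\ measurable_fun (D a) (s a)),
      mu (~` \bigcup_(a in A) (s a @` D a)) = 0,
      forall a b, A a -> A b -> a <> b -> mu ((s a @` D a) `&` (s b @` D b)) = 0,
      forall a, A a -> RN_deriv (D a) (s a) (Phi a)
                       /\ {ae mu, forall x, D a x -> (0 < Phi a x)%R} &
      measurable_fun [set: X] cod
      /\ (forall a, A a -> forall x, D a x -> cod (s a x) = x)].

Definition LSBFS (k : nat) (L : kgraph k) (D : kmor L -> set X)
    (tau : kmor L -> X -> X) (taum : Nk k -> X -> X) : Prop :=
  exists Phi : kmor L -> X -> R,
  [/\
      forall n : Nk k, sbfs [set l : kmor L | kdeg l = n] D tau Phi (taum n),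
      forall v : kvert L, (forall x, D (kid v) x -> tau (kid v) x = x)
                          /\ 0 < mu (D (kid v)),
      (forall l nu, kr nu = ks l ->
         mu ((tau nu @` D nu) `\` D l) = 0
         /\ {ae mu, forall x, D nu x -> tau l (tau nu x) = tau (kcomp l nu) x}) &
      forall m n : Nk k, taum m \o taum n = taum (Nkadd m n)].

Definition sb_rep (k : nat) (L : kgraph k) (D : kmor L -> set X)
    (tau : kmor L -> X -> X) (taum : Nk k -> X -> X) (Phi : kmor L -> X -> R)
    (l : kmor L) (f : X -> R[i]) : X -> R[i] :=
  fun x => (((\1_(tau l @` D l) x : R) / Num.sqrt (Phi l (taum (kdeg l) x)))%:C
            * f (taum (kdeg l) x))%R.

End SBFS.

(* A set I viewed as a measurable space with the discrete sigma-algebra     *)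
(* (all subsets measurable); it carries the counting measure.               *)
Definition discr (I : Type) : Type := I.
HB.instance Definition _ (I : pointedType) := Pointed.on (discr I).
HB.instance Definition _ (I : pointedType) :=
  @isMeasurable.Build default_measure_display (discr I) discrete_measurable
    discrete_measurable0 discrete_measurableC discrete_measurableU.

Definition count_meas (R : realType) (I : pointedType)
  : {measure set (discr I) -> \bar R} := @counting (discr I) R.

(* The orthonormal basis turns every operator of a permutative representation
   into a partial permutation of I.  Under counting measure each injective
   branch sig_l preserves measure, so all Radon-Nikodym derivatives equal 1
   on J_l, the ranges K_l of a fixed degree partition I (two of them meeting
   would make t_l^* kill a basis vector it must map to a basis vector), and
   the coding map sign^n undoes the branch hit by a point.  The semibranching
   operator S_l thus sends e_y to e_(sig_l y) for y in J_l and vanishes on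
   the other basis vectors, exactly as t_l does; as both are read off from
   the coordinates <f, t_l^* e_x>, they agree on all of l^2(I). *)
From Pilot Require Import Defs.
From HB Require Import structures.
From mathcomp Require Import all_boot all_order all_algebra.
From mathcomp Require Import all_classical all_reals all_analysis.
From mathcomp Require Import complex lra.
From mathcomp Require finmap.
Set Implicit Arguments.
Unset Strict Implicit.
Unset Printing Implicit Defensive.
Import Order.TTheory GRing.Theory Num.Theory.
Local Open Scope classical_set_scope.
Local Open Scope ring_scope.

Section PointSupported.
Variables (R : realType) (I : choiceType).

Lemma esum_supp1 (a : I -> \bar R) j :
  (forall i, i != j -> a i = 0%E) -> (0 <= a j)%E ->
  (\esum_(i in [set: I]) a i = a j)%E.
Proof.
move=> a0 a_ge0; rewrite -(esum_set1 a_ge0) [RHS]esum_mkcond.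
apply: eq_esum => i _; have [->|ij] := eqVneq i j; first by rewrite mem_set.
by rewrite a0 // memNset //= => /eqP; rewrite (negbTE ij).
Qed.

Lemma rsum_supp1 (h : I -> R) j : (forall i, i != j -> h i = 0) -> rsum h = h j.
Proof.
move=> h0; rewrite /rsum !(@esum_supp1 _ j).
- by rewrite /= /Order.max; do 2 case: ifPn => ?; lra.
- by move=> i /h0 ->; rewrite oppr0 maxxx.
- by rewrite lee_fin le_max lexx orbT.
- by move=> i /h0 ->; rewrite maxxx.
- by rewrite lee_fin le_max lexx orbT.
Qed.

Lemma csum_supp1 (h : I -> R[i]) j : (forall i, i != j -> h i = 0) -> csum h = h j.
Proof.
move=> h0; rewrite /csum !(@rsum_supp1 _ j); first by case: (h j).
  by move=> i /h0 ->.
by move=> i /h0 ->.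
Qed.

Lemma ip_ebasis (f : I -> R[i]) j : ip f (ebasis R j) = f j.
Proof.
rewrite /ip (@csum_supp1 _ j); first by rewrite /ebasis eqxx conjC1 mulr1.
by move=> i ij; rewrite /ebasis (negbTE ij) conjC0 mulr0.
Qed.

Lemma ip_0 (f : I -> R[i]) : ip f (fun _ => 0) = 0.
Proof.
by rewrite /ip /csum /rsum !esum1 ?subrr //= => i _;
  rewrite conjC0 mulr0 /= ?oppr0 maxxx.
Qed.

Lemma l2_ebasis (j : I) : l2 (ebasis R j).
Proof.
rewrite /l2 /norm2 (@esum_supp1 _ j) ?ltry //.
  by move=> i ij; rewrite /ebasis (negbTE ij) /sqmod /= expr0n /= addr0.
by rewrite lee_fin /sqmod addr_ge0 // sqr_ge0.
Qed.

Lemma ebasis_neq0 (i : I) : ebasis R i <> (fun _ => 0).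
Proof.
by move=> /(congr1 (fun g => g i)); rewrite /ebasis eqxx => /eqP; rewrite oner_eq0.
Qed.

End PointSupported.

Lemma counting_image_inj (R : realType) (T : choiceType) (A : set T) (f : T -> T) :
  {in A &, injective f} -> counting (f @` A) = @counting _ R A.
Proof.
move=> f_inj; have fA_A := inj_card_eq f_inj.
rewrite /counting; have [finA|infA] := pselect (finite_set A).
  have [n An] := (finite_setP A).1 finA.
  have fAn : (f @` A #= `I_n)%card by exact: card_eq_trans fA_A An.
  rewrite !asboolT //; last by apply/finite_setP; exists n.
  by rewrite (card_fset_set An) (card_fset_set fAn).
rewrite !asboolF // => -[n fAn]; apply: infA; apply/finite_setP; exists n.
by apply: card_eq_trans fAn; rewrite card_eq_sym.
Qed.

Lemma counting_gt0 (R : realType) (T : choiceType) (A : set T) (x : T) :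
  A x -> (0 < @counting T R A)%E.
Proof.
move=> Ax; rewrite /counting; case: asboolP => finA; last by rewrite ltry.
rewrite lte_fin ltr0n finmap.cardfs_gt0; apply/finmap.fset0Pn; exists x.
by rewrite in_fset_set // inE.
Qed.

Lemma kdeg_eq0_kid k (L : kgraph k) (l : kmor L) :
  kdeg l = Nk0 k -> l = kid (kr l).
Proof.
move=> dl0; have dl : kdeg l = Nkadd (Nk0 k) (Nk0 k).
  by rewrite dl0; apply/ffunP => i; rewrite !ffunE.
have [p [_ p_uniq]] := kfact dl.
have : (kid (kr l), l) = (l, kid (ks l)).
  by rewrite -(p_uniq (kid (kr l), l)) ?(p_uniq (l, kid (ks l))) //;
    split; rewrite /= ?ks_id ?kr_id ?kcomp_idl ?kcomp_idr ?kdeg_id.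
by case=> ->.
Qed.

Section Permutative.
Variables (R : realType) (k : nat) (L : kgraph k) (I : pointedType).
Variables (t tstar : kmor L -> op R I).
Variables (J K : kmor L -> set I) (sig : kmor L -> I -> I) (sign : Nk k -> I -> I).
Hypothesis rep : is_rep t tstar.
Hypothesis perm : permutative t tstar J K sig.
Hypothesis coding : coding_maps J K sig sign.

Lemma rep_coord l f : l2 f -> forall x, t l f x = ip f (tstar l (ebasis R x)).
Proof.
case: rep => hop _ _ _ _ f_l2 x; have [_ _ adj _] := hop l.
by rewrite -[LHS](ip_ebasis (t l f) x) adj //; exact: l2_ebasis.
Qed.

Lemma sig_inj l : {in J l &, injective (sig l)}.
Proof. by case: perm => bij _ _ _ _; case: (bij l). Qed.

Lemma image_sig l : sig l @` J l = K l.
Proof.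
case: perm => bij _ _ _ _; have [JK _ KJ] := bij l.
apply/seteqP; split; first by move=> _ [y Jy <-]; exact: JK.
by move=> j /KJ [y Jy <-]; exists y.
Qed.

Lemma K_sig l y : J l y -> K l (sig l y).
Proof. by move=> Jy; rewrite -image_sig; exists y. Qed.

Lemma sig_onto l j : K l j -> exists2 y, J l y & sig l y = j.
Proof. by rewrite -image_sig => -[y Jy <-]; exists y. Qed.

Lemma t_ebasis l i : J l i -> t l (ebasis R i) = ebasis R (sig l i).
Proof. by case: perm => _ _ _ tc _ Ji; case: (tc l i) => ->. Qed.

Lemma t_ebasis_out l i : ~ J l i -> t l (ebasis R i) = (fun _ => 0).
Proof. by case: perm => _ _ _ tc _ Ji; case: (tc l i) => _ ->. Qed.

Lemma tstar_ebasis l i : J l i -> tstar l (ebasis R (sig l i)) = ebasis R i.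
Proof. by case: perm => _ _ _ _ tsd Ji; case: (tsd l) => ->. Qed.

Lemma tstar_ebasis_out l l' j :
  l' <> l -> kdeg l' = kdeg l -> K l' j -> tstar l (ebasis R j) = (fun _ => 0).
Proof. by case: perm => _ _ _ _ tsd; case: (tsd l) => _; apply. Qed.

Lemma K_cover n i : exists2 l, kdeg l = n & K l i.
Proof.
case: perm => _ cover _ _ _; have := (cover n).2.
by rewrite -subTset => /(_ i Logic.I) [l dl Kl]; exists l.
Qed.

Lemma K_disj a b j : kdeg a = kdeg b -> a <> b -> K a j -> K b j -> False.
Proof.
move=> dab nab /sig_onto [y Jy <-] Kb.
have := tstar_ebasis_out (nesym nab) (esym dab) Kb.
by rewrite tstar_ebasis //; apply: ebasis_neq0.
Qed.

Lemma K_comp l nu : kr nu = ks l -> K nu `<=` J l.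
Proof. by case: perm => _ _ comp _ _ e; case: (comp l nu e). Qed.

Lemma sig_comp l nu i :
  kr nu = ks l -> J nu i -> sig l (sig nu i) = sig (Defs.kcomp l nu) i.
Proof. by case: perm => _ _ comp _ _ e; case: (comp l nu e) => _; apply. Qed.

Lemma sig_kid v i : J (kid v) i -> sig (kid v) i = i.
Proof.
have vv : kr (kid v) = ks (kid v) by rewrite kr_id ks_id.
have kidK : Defs.kcomp (kid v) (kid v) = kid v.
  by have := kcomp_idl (kid v); rewrite kr_id.
move=> Ji; apply: (@sig_inj (kid v)); rewrite ?inE //.
  by apply: (K_comp vv); exact: K_sig.
by rewrite sig_comp // kidK.
Qed.

Lemma J_kid v : J (kid v) = K (kid v).
Proof.
rewrite -image_sig; apply/seteqP; split; last by move=> _ [i Ji <-]; rewrite sig_kid.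
by move=> i Ji; exists i; rewrite ?sig_kid.
Qed.

Lemma J_kid_uniq v w j : J (kid v) j -> J (kid w) j -> v = w.
Proof.
rewrite !J_kid => Kv Kw; have [e|ne] := eqVneq (kid v) (kid w).
  by rewrite -(kr_id v) e kr_id.
by case: (K_disj _ (elimN eqP ne) Kv Kw); rewrite !kdeg_id.
Qed.

Lemma K_kid_kr l j : K l j -> J (kid (kr l)) j.
Proof. by apply: K_comp; rewrite ks_id. Qed.

(* The degree-0 covering places j in some J (kid w); by CK3 and CK1, w must be
   the source of l, since otherwise t_(ks l) t_w e_j = e_j would vanish. *)
Lemma J_kid_ks l j : J l j -> J (kid (ks l)) j.
Proof.
case: rep => _ [_ CK1] _ CK3 _ Jj.
case: perm => _ cover _ _ _; have := (cover (Nk0 k)).1.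
rewrite -subTset => /(_ j Logic.I) [w dw]; rewrite (kdeg_eq0_kid dw) => Jw.
have [<- //|nw] := eqVneq (kr w) (ks l); exfalso.
have := CK1 _ _ (nesym (elimN eqP nw)) _ (l2_ebasis R j).
rewrite /= t_ebasis // sig_kid //.
have := CK3 l _ (l2_ebasis R j); rewrite /= t_ebasis // tstar_ebasis // => <-.
exact: ebasis_neq0.
Qed.

Lemma J_comp l nu j : kr nu = ks l -> J nu j -> J (Defs.kcomp l nu) j.
Proof.
case: rep => _ _ CK2 _ _ e Jj; apply/not_notP => nJ.
have := CK2 l nu (esym e) _ (l2_ebasis R j).
rewrite /= (t_ebasis Jj) (t_ebasis_out nJ) t_ebasis; first exact: ebasis_neq0.
by apply: (K_comp e); exact: K_sig.
Qed.

Lemma sign_sig l y : J l y -> sign (kdeg l) (sig l y) = y.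
Proof.
move=> Jy; have [Jsy sigK] := coding erefl (K_sig Jy).
by apply: (@sig_inj l); rewrite ?inE.
Qed.

Lemma sign_add m n : sign m \o sign n = sign (Nkadd m n).
Proof.
apply/funext => i /=.
have [l dl /sig_onto [y Jy sy]] := K_cover n i.
have [l' dl' /[dup] Kl' /sig_onto [y' Jy' sy']] := K_cover m y.
have e : kr l' = ks l := J_kid_uniq (K_kid_kr Kl') (J_kid_ks Jy).
have dc : kdeg (Defs.kcomp l l') = Nkadd m n.
  by rewrite kdeg_comp ?dl ?dl' //; apply/ffunP => z; rewrite !ffunE addnC.
have sn : sign n i = y by rewrite -sy -dl sign_sig.
have sm : sign m y = y' by rewrite -sy' -dl' sign_sig.
rewrite sn sm; have <- : sig (Defs.kcomp l l') y' = i by rewrite -sig_comp // sy' sy.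
by rewrite -dc sign_sig //; exact: J_comp.
Qed.

Lemma J_kid_neq0 v : ~ opeq (t (kid v)) (@zero_op R I) -> exists x, J (kid v) x.
Proof.
case: rep => _ [CK1 _] _ _ _ tv_neq0; apply/not_existsP => J0.
apply: tv_neq0 => f f_l2; apply/funext => x; rewrite rep_coord //.
by rewrite ((CK1 v).2 _ (l2_ebasis R x)) t_ebasis_out ?ip_0.
Qed.

Local Notation mu := (count_meas R I).
Local Notation D := (J : kmor L -> set (discr I)).

Lemma RN_deriv_sig_one l : RN_deriv mu (D l) (sig l) (fun _ => 1).
Proof.
split=> [|//|E _ EJ]; first exact: measurable_cst.
rewrite integral_cst // mul1e; apply: counting_image_inj => x y /[!inE] Ex Ey.
by apply: sig_inj; rewrite inE; apply: EJ.
Qed.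

Lemma sbfs_degree (Lfin : kfinite L) n :
  sbfs mu [set l | kdeg l = n] D sig (fun _ _ => 1) (sign n).
Proof.
split.
- by split; [exact: Lfin | move=> a _; split].
- rewrite (_ : ~` _ = set0) ?measure0 //; apply/seteqP; split=> // x /= nx.
  by have [l dl Kl] := K_cover n x; apply: nx; exists l; rewrite // image_sig.
- move=> a b /= da db nab; rewrite !image_sig (_ : K a `&` K b = set0) ?measure0 //.
  apply/seteqP; split=> // x [Ka Kb].
  by apply: (K_disj _ nab Ka Kb); rewrite da db.
- by move=> a _; split; [exact: RN_deriv_sig_one | exact: aeW].
- by split=> // a /= <- x; exact: sign_sig.
Qed.

Lemma permutative_LSBFS (Lfin : kfinite L) :
  (forall v : kvert L, ~ opeq (t (kid v)) (@zero_op R I)) -> LSBFS mu D sig sign.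
Proof.
move=> t_neq0; exists (fun _ _ => 1); split.
- exact: sbfs_degree.
- move=> v; split; first exact: sig_kid.
  by have [x Jx] := J_kid_neq0 (t_neq0 v); exact: counting_gt0 Jx.
- move=> l nu e; split; last by apply: aeW => x; exact: sig_comp.
  rewrite image_sig (_ : K nu `\` J l = set0) ?measure0 //.
  by apply/seteqP; split=> // x [/(K_comp e)].
- exact: sign_add.
Qed.

Lemma RN_deriv_sig_eq1 Phi l y :
  RN_deriv mu (D l) (sig l) Phi -> J l y -> Phi y = 1.
Proof.
case=> _ _ Phi_int Jy; have yJ : [set y] `<=` D l by move=> _ ->.
have := Phi_int [set y] Logic.I yJ.
rewrite image_set1 (eq_integral (cst (Phi y)%:E)); last by move=> z /[!inE] ->.
by rewrite integral_cst // /= /counting !asboolT ?fset_set1 ?finmap.cardfs1 ?mule1 // => -[].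
Qed.

Lemma sb_rep_perm (Phi : kmor L -> discr I -> R) l (f : I -> R[i]) :
  RN_deriv mu (D l) (sig l) (Phi l) -> l2 f -> sb_rep D sig sign Phi l f = t l f.
Proof.
move=> Phi_RN f_l2; apply/funext => x; rewrite /sb_rep rep_coord // indicE.
have [/sig_onto [y Jy <-]|nKx] := pselect (K l x).
  rewrite sign_sig // tstar_ebasis // ip_ebasis mem_set; last by exists y.
  by rewrite (RN_deriv_sig_eq1 Phi_RN Jy) sqrtr1 divr1 mul1r.
have [l' dl' Kl'] := K_cover (kdeg l) x.
have nl : l' <> l by move=> el; apply: nKx; rewrite -el.
rewrite (tstar_ebasis_out nl dl' Kl') ip_0 image_sig memNset // mul0r.
by rewrite (_ : real_complex R 0 = 0) ?mul0r.
Qed.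

End Permutative.

Theorem proposition4p7 (R : realType) (k : nat) (L : kgraph k)
    (Lfin : kfinite L) (Lns : no_sources L)
    (I : pointedType) (t tstar : kmor L -> op R I)
    (J K : kmor L -> set I) (sig : kmor L -> I -> I) (sign : Nk k -> I -> I) :
  is_rep t tstar ->
  (forall v : kvert L, ~ opeq (t (kid v)) (@zero_op R I)) ->
  permutative t tstar J K sig ->
  coding_maps J K sig sign ->
  LSBFS (count_meas R I) (J : kmor L -> set (discr I)) sig sign
  /\ forall Phi : kmor L -> discr I -> R,
       (forall l, RN_deriv (count_meas R I) (J l) (sig l) (Phi l)) ->
       forall (l : kmor L) (f : I -> R[i]), l2 f ->
         sb_rep (J : kmor L -> set (discr I)) sig sign Phi l f = t l f.
Proof.
move=> rep t_neq0 perm coding; split.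
  exact: permutative_LSBFS rep perm coding Lfin t_neq0.
move=> Phi Phi_RN l f f_l2.
have := sb_rep_perm rep perm coding (Phi_RN l) f_l2; exact.
Qed.
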